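(* Let $G$ be a connected graph, $c\in V(G)$, and run the scan procedure at $c$ (with any processing order). Let $e$ and $f$ be two distinct edges incident to $c$. If $(e,f)\in\overline{\alpha}_c$, then either $e$ and $f$ span no square, or they span a square whose top vertex is not unique or is primal (i.e. lies in $N(c)$). Moreover, every pair $(e,f)$ of distinct edges incident to $c$ that span no square lies in $\overline{\alpha}_c$.
   Context: All graphs are finite, simple, undirected; $N(x)$ is the open neighborhood of $x$. For distinct edges $e=vu$, $f=vw$ sharing the vertex $v$, a square spanned by $e$ and $f$ is a 4-cycle $vuxw$ with $x\ne v$ adjacent to both $u$ and $w$; $x$ is its top vertex. A top vertex $x$ is unique if $|N(x)\cap N(v)|=2$. Scan procedure at $c$: the vertices of $N(c)$ are called primal, and edges incident to $c$ primal edges. Maintain two sets $I$ (incidence list) and $A$ (absence list) of unordered pairs of primal edges, both initially empty, and for every non-primal vertex $w\ne c$ a record of at most two ''recorded primal neighbors'' (first and second), initially none. Process the neighbors $u$ of $c$ one by one in an arbitrary order, and for each such $u$ process its neighbors $w\neq c$ in an arbitrary order: (1) if $w\in N(c)$, add $\{cu,cw\}$ to $A$; (2) else, if $w$ has no recorded primal neighbor, record $u$ as its first primal neighbor; (3) else, if $w$ has exactly one recorded primal neighbor $v$, record $u$ as its second primal neighbor, and if $\{cu,cv\}\notin I$ add $\{cu,cv\}$ to $I$, otherwise add $\{cu,cv\}$ to $A$; (4) else ($w$ has recorded first and second primal neighbors $v_1,v_2$) add $\{cv_1,cv_2\},\{cv_1,cu\},\{cv_2,cu\}$ to $A$ (the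 record is not changed). After the procedure, $\alpha_c$ is the symmetric relation on primal edges consisting of the pairs in $I$, $\beta_c$ the symmetric relation consisting of the pairs in $A$, and $\overline{\alpha}_c$ the set of pairs of primal edges not in $I$. *)

From mathcomp Require Import all_boot.
Set Warnings "-notation-overridden".
Set Implicit Arguments. Unset Strict Implicit. Unset Printing Implicit Defensive.

(* A primal edge c-u is identified with its primal endpoint u; an unordered
   pair of primal edges {cu, cw} is stored as an ordered pair (u, w) and
   membership is tested up to swapping. *)

Section Scan.
Variables (T : finType) (adj : rel T) (c : T).

Definition simple_graph := symmetric adj /\ irreflexive adj.
Definition connected_graph := forall x y : T, connect adj x y.

Definition in_pairs (P : seq (T * T)) (u w : T) : bool :=
  ((u, w) \in P) || ((w, u) \in P).

(* State of the scan: incidence list I, absence list A, and for each vertex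
   the list of its recorded primal neighbors (first, second), at most two. *)
Record scan_state := ScanState {
  st_I : seq (T * T);
  st_A : seq (T * T);
  st_rec : T -> seq T }.

Definition upd_rec (r : T -> seq T) (w : T) (s : seq T) : T -> seq T :=
  fun x => if x == w then s else r x.

(* Processing neighbor w (w <> c) of the primal vertex u. *)
Definition scan_step (u : T) (st : scan_state) (w : T) : scan_state :=
  let: ScanState Ii Aa r := st in
  if adj c w then ScanState Ii ((u, w) :: Aa) r
  else match r w with
  | [::] => ScanState Ii Aa (upd_rec r w [:: u])
  | [:: v] =>
      if in_pairs Ii u v then ScanState Ii ((u, v) :: Aa) (upd_rec r w [:: v; u])
      else ScanState ((u, v) :: Ii) Aa (upd_rec r w [:: v; u])
  | v1 :: v2 :: _ =>
      ScanState Ii [:: (v1, v2), (v1, u), (v2, u) & Aa] r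
  end.

Definition scan (ordc : seq T) (ordn : T -> seq T) : scan_state :=
  foldl (fun st u => foldl (scan_step u) st (ordn u))
        (ScanState [::] [::] (fun _ => [::])) ordc.

Definition valid_order (ordc : seq T) (ordn : T -> seq T) : Prop :=
  uniq ordc /\ (forall x, (x \in ordc) = adj c x) /\
  (forall u, uniq (ordn u) /\ forall x, (x \in ordn u) = adj u x && (x != c)).

Definition alpha_c ordc ordn (u w : T) : bool := in_pairs (st_I (scan ordc ordn)) u w.
Definition alphabar_c ordc ordn (u w : T) : bool := ~~ alpha_c ordc ordn u w.

Definition top_vertex (u w x : T) : bool := [&& x != c, adj x u & adj x w].
Definition span_square (u w : T) : Prop := exists x, top_vertex u w x.

Definition unique_top (x : T) : bool := #|[set y | adj x y && adj c y]| == 2.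

End Scan.

From mathcomp Require Import all_boot.
Set Implicit Arguments. Unset Strict Implicit. Unset Printing Implicit Defensive.

(* The scan at c is a left fold of [scan_step] over the schedule of all
   pairs (u, w), u in N(c), w in N(u) \ {c}, in processing order.  Both
   claims are invariants of this fold.

   - Soundness: every recorded primal neighbor y of a vertex z satisfies
     z ~ y and z <> c, so a pair {cu, cv} entered into I at step (3) while
     processing w has w as the top vertex of a square spanned by cu, cv.
     Hence edges spanning no square never enter I: they lie in alphabar_c.
   - Completeness: for a non-primal vertex x, the record of x is always the
     first two primal neighbors of x met by the fold, and once it holds two
     of them, a and b, the pair {ca, cb} is in I.  If x is a unique,
     non-primal top vertex of a square on cu, cw, its primal neighbors are
     exactly u and w, so at the end of the scan {cu, cw} is in I.
   The first claim of the theorem is the contrapositive of completeness. *)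

Lemma take_take_cat (A : Type) n (s t : seq A) :
  take n (take n s ++ t) = take n (s ++ t).
Proof. by elim: s n => [|a s IH] [|n] //=; rewrite ?take0 ?IH. Qed.

Lemma foldl_invariant (A : Type) (B : eqType) (P : A -> Prop)
    (f : A -> B -> A) (s : seq B) (a : A) :
  P a -> (forall a' b, b \in s -> P a' -> P (f a' b)) -> P (foldl f a s).
Proof.
elim: s a => //= b s IH a Pa Hf; apply: IH => [|a' b' sb']; last first.
  by apply: Hf; rewrite inE sb' orbT.
by apply: Hf => //; rewrite mem_head.
Qed.

Section ScanAsFold.
Variables (T : finType) (adj : rel T) (c : T).

Definition init_state : scan_state T := ScanState [::] [::] (fun _ => [::]).

Definition scan_schedule (ordc : seq T) (ordn : T -> seq T) : seq (T * T) :=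
  [seq (u, w) | u <- ordc, w <- ordn u].

Definition scan_pair (st : scan_state T) (p : T * T) : scan_state T :=
  scan_step adj c p.1 st p.2.

Lemma foldl_scan_pair u st (t : seq T) :
  foldl scan_pair st [seq (u, w) | w <- t] = foldl (scan_step adj c u) st t.
Proof. by elim: t st => //= w t IH st; rewrite IH. Qed.

Lemma scan_foldE ordc ordn :
  scan adj c ordc ordn = foldl scan_pair init_state (scan_schedule ordc ordn).
Proof.
rewrite /scan /scan_schedule -/init_state; move: init_state.
by elim: ordc => //= u s IH st; rewrite foldl_cat foldl_scan_pair IH.
Qed.

Lemma in_pairsC (P : seq (T * T)) a b : in_pairs P a b = in_pairs P b a.
Proof. by rewrite /in_pairs orbC. Qed.

Lemma step_I_mono u st w a b :
  in_pairs (st_I st) a b -> in_pairs (st_I (scan_step adj c u st w)) a b.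
Proof.
have cons_mono (P : seq (T * T)) p : in_pairs P a b -> in_pairs (p :: P) a b.
  by rewrite /in_pairs !in_cons => /orP[->|->]; rewrite ?orbT.
case: st => Ii Aa r /=; case: (adj c w) => //.
by case: (r w) => [|v [|v2 s]] //; case: ifP => //= _; apply: cons_mono.
Qed.

Section RecordOfOneVertex.
Variable x : T.
Hypothesis ncx : ~~ adj c x.

Lemma step_rec_other u st w :
  w != x -> st_rec (scan_step adj c u st w) x = st_rec st x.
Proof.
move=> nwx; case: st => Ii Aa r /=; case: (adj c w) => //.
by case: (r w) => [|v [|v2 s]] //; try case: ifP; rewrite /= /upd_rec eq_sym (negbTE nwx).
Qed.

Lemma step_rec_self u st :
  size (st_rec st x) <= 2 ->
  st_rec (scan_step adj c u st x) x = take 2 (rcons (st_rec st x) u).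
Proof.
case: st => Ii Aa r /=; rewrite (negbTE ncx).
case Er: (r x) => [|v [|v2 [|]]] //= _; try case: ifP => _;
  by rewrite /= /upd_rec ?eqxx ?Er.
Qed.

Lemma step_second_record u st v :
  st_rec st x = [:: v] -> in_pairs (st_I (scan_step adj c u st x)) v u.
Proof.
case: st => Ii Aa r /= ->; rewrite (negbTE ncx) in_pairsC.
by case: ifP => // _; rewrite /in_pairs mem_head.
Qed.

Definition hits (s : seq (T * T)) : seq T := [seq p.1 | p <- s & p.2 == x].

Lemma fold_record s :
  let st := foldl scan_pair init_state s in
  st_rec st x = take 2 (hits s) /\
  forall a b, st_rec st x = [:: a; b] -> in_pairs (st_I st) a b.
Proof.
elim/last_ind: s => [|s p [Erec Hpair]] //=.
rewrite /hits foldl_rcons filter_rcons -/(hits s).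
set st := foldl scan_pair init_state s; rewrite -/st in Erec Hpair.
have [px|npx] := eqVneq p.2 x; last first.
  rewrite /scan_pair step_rec_other //; split => // a b /Hpair.
  exact: step_I_mono.
have small : size (st_rec st x) <= 2 by rewrite Erec size_take; case: ltnP.
rewrite map_rcons /scan_pair px step_rec_self //; split.
  by rewrite Erec -!cats1 take_take_cat.
move: Hpair; case Er: (st_rec st x) small => [|v [|a' [|]]] //= _ Hpair a b.
- by case=> <- <-; apply: step_second_record.
- by case=> <- <-; apply/step_I_mono/Hpair.
Qed.

Lemma hits_row u (t : seq T) :
  uniq t -> hits [seq (u, w) | w <- t] = if x \in t then [:: u] else [::].
Proof.
move=> ut; rewrite /hits filter_map -map_comp.
rewrite (@eq_filter _ _ (pred1 x)) => [|w]; last by [].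
case: ifP => [xt|nxt]; first by rewrite filter_pred1_uniq.
suff -> : filter (pred1 x) t = [::] by [].
by apply/eqP; rewrite -[_ == _]negbK -has_filter has_pred1 nxt.
Qed.

Lemma hits_schedule ordc ordn :
  (forall u, uniq (ordn u)) ->
  hits (scan_schedule ordc ordn) = [seq u <- ordc | x \in ordn u].
Proof.
move=> Hu; elim: ordc => //= u s IH.
rewrite /scan_schedule /= -/(scan_schedule s ordn).
have hits_cat s1 s2 : hits (s1 ++ s2) = hits s1 ++ hits s2.
  by rewrite /hits filter_cat map_cat.
by rewrite hits_cat IH hits_row //; case: ifP.
Qed.

End RecordOfOneVertex.

Lemma in_pairs_perm (P : seq (T * T)) a b u w :
  perm_eq [:: a; b] [:: u; w] -> in_pairs P a b = in_pairs P u w.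
Proof.
move=> pab; have : a \in [:: u; w] by rewrite -(perm_mem pab) mem_head.
rewrite !inE => /orP[]/eqP Ea; subst a.
  by move: pab; rewrite perm_cons => /perm_small_eq-/(_ isT)[->].
have pwu : perm_eq [:: u; w] [:: w; u] by rewrite (perm_catC [:: u] [:: w]).
move: (perm_trans pab pwu); rewrite perm_cons => /perm_small_eq-/(_ isT)[->].
by rewrite in_pairsC.
Qed.

Section SymmetricGraph.
Hypothesis adj_sym : symmetric adj.

Definition sound_state (st : scan_state T) : Prop :=
  (forall p, p \in st_I st -> span_square adj c p.1 p.2) /\
  (forall z y, y \in st_rec st z -> adj z y && (z != c)).

Lemma step_sound u st w :
  adj u w -> w != c -> sound_state st -> sound_state (scan_step adj c u st w).
Proof.
move=> uw wc; case: st => Ii Aa r [/= HI Hr].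
have rec_upd s : all (adj w) s ->
    forall z y, y \in upd_rec r w s z -> adj z y && (z != c).
  move=> /allP sw z y; rewrite /upd_rec.
  case: ifP => [/eqP-> /sw -> | _]; [by rewrite wc | exact: Hr].
case: (adj c w); first by split.
case Erw: (r w) => [|v [|v2 s]]; last by split.
  by split => //; apply: rec_upd; rewrite /= adj_sym uw.
have /andP[wv _] : adj w v && (w != c) by apply: Hr; rewrite Erw mem_head.
have Hr' : forall z y, y \in upd_rec r w [:: v; u] z -> adj z y && (z != c).
  by apply: rec_upd; rewrite /= wv adj_sym uw.
have sq : span_square adj c u v by exists w; rewrite /top_vertex wc adj_sym uw wv.
case: (in_pairs Ii u v); split => //= p.
by rewrite inE => /orP[/eqP-> //|/HI].
Qed.

Lemma scan_sound ordc ordn :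
  valid_order adj c ordc ordn -> sound_state (scan adj c ordc ordn).
Proof.
move=> [_ [_ Hn]]; rewrite scan_foldE.
apply: foldl_invariant => [|st _ /allpairsPdep[u [w [_ wu ->]]]]; first by split.
by move: wu; rewrite (proj2 (Hn u)) => /andP[]; apply: step_sound.
Qed.

Lemma alpha_spans_square ordc ordn u w :
  valid_order adj c ordc ordn -> alpha_c adj c ordc ordn u w -> span_square adj c u w.
Proof.
move=> V; have [HI _] := scan_sound V.
rewrite /alpha_c /in_pairs => /orP[/HI // | /HI [x /and3P[xc xw xu]]].
by exists x; apply/and3P.
Qed.

Lemma unique_top_neighbors u w x :
  top_vertex adj c u w x -> unique_top adj c x -> adj c u -> adj c w -> u != w ->
  [set y | adj x y && adj c y] = [set u; w].
Proof.
case/and3P=> _ xu xw ux cu cw uw; apply/eqP; rewrite eq_sym eqEcard cards2 uw.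
rewrite (eqP ux) leqnn andbT; apply/subsetP => y.
by rewrite !inE => /orP[]/eqP->; rewrite ?xu ?cu ?xw ?cw.
Qed.

Lemma unique_top_in_alpha ordc ordn u w x :
  valid_order adj c ordc ordn -> top_vertex adj c u w x -> unique_top adj c x ->
  ~~ adj c x -> adj c u -> adj c w -> u != w -> alpha_c adj c ordc ordn u w.
Proof.
move=> [uc [Hc Hn]] tx ux ncx cu cw uw.
have xc : x != c by case/and3P: tx.
pose L := [seq y <- ordc | x \in ordn y].
have memL : L =i [:: u; w].
  move=> y; have /setP/(_ y) := unique_top_neighbors tx ux cu cw uw.
  by rewrite mem_filter Hc (proj2 (Hn y)) xc andbT !inE (adj_sym y) andbC.
have pL : perm_eq L [:: u; w].
  by apply: uniq_perm => //; [apply: filter_uniq | rewrite /= inE uw].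
have [Erec Hpair] := fold_record ncx (scan_schedule ordc ordn).
rewrite hits_schedule -/L in Erec; last by move=> v; case: (Hn v).
rewrite /alpha_c scan_foldE.
move: Erec Hpair; rewrite take_oversize ?(perm_size pL) // => ->.
case: L pL {memL} => [|a [|b [|? ?]]] pL; have //= _ := perm_size pL.
by rewrite -(in_pairs_perm _ pL); apply.
Qed.

End SymmetricGraph.
End ScanAsFold.

Theorem mainTheorem2 (T : finType) (adj : rel T) (c : T)
    (ordc : seq T) (ordn : T -> seq T) :
  simple_graph adj -> connected_graph adj -> valid_order adj c ordc ordn ->
  (forall u w : T, adj c u -> adj c w -> u != w ->
     alphabar_c adj c ordc ordn u w ->
     ~ span_square adj c u w \/
     exists x, top_vertex adj c u w x && (~~ unique_top adj c x || adj c x)) /\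
  (forall u w : T, adj c u -> adj c w -> u != w ->
     ~ span_square adj c u w -> alphabar_c adj c ordc ordn u w).
Proof.
move=> [adj_sym _] _ V; split => u w cu cw uw.
- move=> not_alpha; have [/existsP[x tx]|] := boolP [exists x, top_vertex adj c u w x].
    right; exists x; rewrite tx /=; apply: contraNT not_alpha.
    rewrite negb_or negbK => /andP[ux ncx].
    exact: (unique_top_in_alpha adj_sym V tx).
  by rewrite negb_exists => /forallP no_top; left => -[x]; apply/negP.
- by move=> no_square; apply/negP => /(alpha_spans_square adj_sym V).
Qed.
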